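(* Let $K\ge 1$ and, for $k=1,\dots,K$, let $a_k>0$, $b_k>0$, $P_{L,k}>0$, and let $\gamma_{\mathrm{out}}>0$. Let $Z_1,\dots,Z_K$ be independent, with $Z_k$ gamma distributed with shape $a_k$ and scale $b_k$ (the moment-matched gamma approximation described in the context), and for $\bar{\gamma}>0$ set $\gamma_k=\frac{\bar{\gamma}}{P_{L,k}}Z_k^2$, $\gamma^*=\max_k\gamma_k$, and $P_{out}(\bar{\gamma})=\Pr[\gamma^*\le\gamma_{\mathrm{out}}]$. Define $$P_{out}^{\infty}(\bar{\gamma})=\prod_{k=1}^{K}\left(\frac{b_k^2}{\gamma_{\mathrm{out}}\,(a_k!)^{-\frac{2}{a_k}}\,P_{L,k}}\,\bar{\gamma}\right)^{-\frac{a_k}{2}},$$ where $a_k!:=\Gamma(a_k+1)$. Then $P_{out}(\bar{\gamma})$ behaves as $P_{out}^{\infty}(\bar{\gamma})$ as $\bar{\gamma}\to\infty$, i.e. $P_{out}(\bar{\gamma})/P_{out}^{\infty}(\bar{\gamma})\to 1$.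
   Context: Model: there are $K$ reflecting surfaces; surface $k$ has $N_k$ elements with mutually independent amplitudes $\alpha_k^{(i)}$ (Nakagami-$m$, shape $m_{k,1}$, spread $\Omega_{k,1}$) and $\beta_k^{(i)}$ (Nakagami-$m$, shape $m_{k,2}$, spread $\Omega_{k,2}$), and $a_k=N_k\mu_k^2/\sigma_k^2$, $b_k=\sigma_k^2/\mu_k$, where $\mu_k,\sigma_k^2$ are the mean and variance of $\alpha_k^{(1)}\beta_k^{(1)}$; the distribution of $\sum_{i=1}^{N_k}\alpha_k^{(i)}\beta_k^{(i)}$ is approximated by the gamma law with shape $a_k$, scale $b_k$. $P_{L,k}$ is the path loss of path $k$, $\bar{\gamma}$ the average SNR, $\gamma_{\mathrm{out}}$ the outage threshold. *)

From HB Require Import structures.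
From mathcomp Require Import all_boot all_order all_algebra.
From mathcomp Require Import all_classical all_reals all_analysis.
Set Implicit Arguments. Unset Strict Implicit. Unset Printing Implicit Defensive.
Import Order.TTheory GRing.Theory Num.Def Num.Theory.
Local Open Scope classical_set_scope.
Local Open Scope ring_scope.

Definition GammaF {R : realType} (a : R) : R :=
  Rintegral lebesgue_measure `]0%R, +oo[%classic
            (fun x : R => x `^ (a - 1) * expR (- x)).

Definition gamma_pdf {R : realType} (a b : R) (x : R) : R :=
  if (0 < x) then x `^ (a - 1) * expR (- (x / b)) / (GammaF a * b `^ a) else 0.

Definition gamma_distributed {R : realType} {d : measure_display}
  {T : measurableType d} (P : probability T R) (a b : R) (X : T -> R) : Prop :=
  measurable_fun setT X /\
  forall B : set R, measurable B ->
    P (X @^-1` B) = (\int[lebesgue_measure]_(x in B) (gamma_pdf a b x)%:E)%E.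

Definition mutually_independent {R : realType} {d : measure_display}
  {T : measurableType d} (P : probability T R) (K : nat) (X : 'I_K -> T -> R)
  : Prop :=
  (forall k, measurable_fun setT (X k)) /\
  forall B : 'I_K -> set R, (forall k, measurable (B k)) ->
    P (\bigcap_(k in [set: 'I_K]) (X k @^-1` B k)) =
    (\prod_(k < K) P (X k @^-1` B k))%E.

From HB Require Import structures.
From mathcomp Require Import all_boot all_order all_algebra.
From mathcomp Require Import all_classical all_reals all_analysis.
From mathcomp Require Import measurable_realfun.
From mathcomp.algebra_tactics Require Import ring lra.
Import Order.TTheory GRing.Theory Num.Def Num.Theory.
Import numFieldTopology.Exports numFieldNormedType.Exports.
Local Open Scope classical_set_scope.
Local Open Scope ring_scope.

(** The outage event [max_k gbar / PL_k * Z_k^2 <= gout] is the intersection of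
    the independent events [|Z_k| <= c_k] with [c_k = sqrt (gout * PL_k / gbar)],
    and [c_k -> 0].  On [(0, c]] the gamma density lies between [e^(-c/b)] and [1]
    times [x^(a-1) / (Gamma a * b^a)]; with [int_0^c x^(a-1) dx = c^a / a] and
    [Gamma (a+1) = a * Gamma a] (integration by parts) this squeezes
    [P (|Z| <= c)] between [e^(-c/b) q] and [q] for
    [q = c^a / (Gamma (a+1) * b^a)], which is exactly the [k]-th factor of
    [Poutinf].  Hence every factor of [Pout / Poutinf] tends to 1. *)

Section analysis_facts.
Context {R : realType}.
Local Notation mu := (@lebesgue_measure R).

Lemma derivable_oo_LRcontinuous_cc (f : R -> R) (x y : R) : x <= y ->
  {in `[x, y], forall z, derivable f z 1} -> derivable_oo_LRcontinuous f x y.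
Proof.
move=> xy df.
have cf z : z \in `[x, y] -> {for z, continuous f}.
  by move=> /df/derivable1_diffP/differentiable_continuous.
split.
- by move=> z /subset_itv_oo_cc/df.
- by apply: cvg_at_right_filter; apply: cf; rewrite in_itv /= lexx xy.
- by apply: cvg_at_left_filter; apply: cf; rewrite in_itv /= lexx xy.
Qed.

Lemma ge0_integral_bigcup_cvg (F : (set R)^nat) (f : R -> R) :
  (forall n, measurable (F n)) -> nondecreasing_seq F ->
  measurable_fun setT f -> (forall x, (\bigcup_n F n) x -> 0 <= f x) ->
  (\int[mu]_(x in F n) (f x)%:E @[n --> \oo] -->
   \int[mu]_(x in \bigcup_n F n) (f x)%:E)%E.
Proof.
move=> mF ndF mf f0; apply: ge0_nondecreasing_set_cvg_integral => //.
- by move=> n; apply/measurable_EFinP/measurable_funTS.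
- by move=> n x Fx; rewrite lee_fin; apply: f0; exists n.
Qed.

Lemma ge0_integral_bigcup_lim (F : (set R)^nat) (f : R -> R) (l : \bar R) :
  (forall n, measurable (F n)) -> nondecreasing_seq F ->
  measurable_fun setT f -> (forall x, (\bigcup_n F n) x -> 0 <= f x) ->
  (\int[mu]_(x in F n) (f x)%:E @[n --> \oo] --> l)%E ->
  (\int[mu]_(x in \bigcup_n F n) (f x)%:E)%E = l.
Proof.
move=> mF ndF mf f0; apply: cvg_unique; first exact: ereal_hausdorff.
exact: ge0_integral_bigcup_cvg.
Qed.

Lemma bigcup_itv_cc_oc (c : R) : 0 < c ->
  \bigcup_n `[c * harmonic n.+1, c]%classic = `]0%R, c]%classic.
Proof.
move=> c0; apply/seteqP; split => x /=.
  move=> [n _]; rewrite /= !in_itv /= => /andP[+ ->]; rewrite andbT.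
  by apply: lt_le_trans; rewrite mulr_gt0 // harmonic_gt0.
rewrite in_itv /= => /andP[x0 xc]; exists (truncn (c / x)) => //=.
rewrite in_itv /= xc andbT ler_pdivrMr ?ltr0Sn // mulrC -ler_pdivrMr //.
by rewrite ltW // (lt_trans (truncnS_gt _)) // ltr_nat.
Qed.

Lemma nondecreasing_itv_cc_oc (c : R) : 0 < c ->
  nondecreasing_seq (fun n => `[c * harmonic n.+1, c]%classic : set R).
Proof.
move=> c0 n m nm; apply/subsetPset; apply: subset_itvr; rewrite bnd_simp.
by rewrite ler_pM2l // lef_pV2 ?posrE // ler_nat ltnS.
Qed.

Lemma bigcup_itv_cc_oy :
  \bigcup_n `[harmonic n, n.+2%:R]%classic = `]0%R, +oo[%classic :> set R.
Proof.
apply/seteqP; split => x /=.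
  move=> [n _]; rewrite /= !in_itv /= andbT => /andP[+ _].
  exact/lt_le_trans/harmonic_gt0.
rewrite in_itv /= andbT => x0; have ix0 : 0 < x^-1 by rewrite invr_gt0.
move: (truncnS_gt (x + x^-1)); set n := truncn _ => xn.
exists n => //; rewrite /harmonic /= in_itv /= -[x in _ <= x]invrK.
by rewrite lef_pV2 ?posrE // -!natr1 in xn *; apply/andP; split; lra.
Qed.

Lemma nondecreasing_itv_cc_oy :
  nondecreasing_seq (fun n => `[harmonic n, n.+2%:R]%classic : set R).
Proof.
move=> n m nm; apply/subsetPset; apply: subset_itv; rewrite bnd_simp.
  by rewrite lef_pV2 ?posrE // ler_nat ltnS.
by rewrite ler_nat !ltnS.
Qed.

Lemma cvgy_inv : x^-1 @[x --> +oo] --> (0 : R).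
Proof.
have x_gt0 : \forall x \near +oo, 0 < (id : R -> R) x by exact: nbhs_pinfty_gt.
exact: (gtr0_cvgV0 x_gt0).2 cvg_id.
Qed.

Lemma mulr_sqr_le_itvE (k u z : R) : 0 < k -> 0 < u ->
  (k * z ^+ 2 <= u) = (z \in `[- Num.sqrt (u / k), Num.sqrt (u / k)]).
Proof.
move=> k0 u0; rewrite in_itv /= -ler_norml -sqrtr_sqr.
by rewrite ler_sqrt ?divr_ge0 ?(ltW u0) ?(ltW k0) // ler_pdivlMr // mulrC.
Qed.

Lemma cvgy_sqrt_div (u s : R) :
  Num.sqrt (u / (g / s)) @[g --> +oo] --> (0 : R).
Proof.
rewrite -sqrtr0; apply: continuous_cvg; first exact: sqrt_continuous.
under eq_fun do rewrite invf_div mulrA.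
by rewrite -(mulr0 (u * s)); apply: cvgM; [exact: cvg_cst | exact: cvgy_inv].
Qed.

Lemma bigmax_mulr_sqr_le_setE {T : Type} (K : nat)
    (s : 'I_K -> R) (u : R) (X : 'I_K -> T -> R) :
  (forall k, 0 < s k) -> 0 < u ->
  [set t | \big[Num.max/0]_(k < K) (s k * X k t ^+ 2) <= u] =
  \bigcap_(k in [set: 'I_K])
    (X k @^-1` `[- Num.sqrt (u / s k), Num.sqrt (u / s k)]).
Proof.
move=> s0 u0; apply/seteqP; split => t /=.
  move=> /bigmax_leP[_ le_u] k _ /=.
  by rewrite -mulr_sqr_le_itvE //; exact: le_u.
move=> in_itvs; apply/bigmax_leP; split => [|k _]; first exact: ltW.
by rewrite mulr_sqr_le_itvE //; exact: in_itvs.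
Qed.

End analysis_facts.

Section products.
Context {R : numFieldType} {I : Type} {F : set_system I} {FF : Filter F}.

Lemma cvgr_prod {J : Type} (s : seq J) {f : J -> I -> R} {l : J -> R} :
  (forall j, f j t @[t --> F] --> l j) ->
  \prod_(j <- s) f j t @[t --> F] --> \prod_(j <- s) l j.
Proof.
move=> fl; elim: s => [|j s IH].
  by under eq_fun do rewrite big_nil; rewrite big_nil; exact: cvg_cst.
by under eq_fun do rewrite big_cons; rewrite big_cons; exact: cvgM.
Qed.

End products.

Section powR_integrals.
Context {R : realType}.
Local Notation mu := (@lebesgue_measure R).

Lemma derivable_powR_cc (p e c : R) : 0 < e ->
  {in `[e, c], forall x, derivable (@powR R ^~ p) x 1}.
Proof.
move=> e0 x; rewrite in_itv /= => /andP[ex _].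
by apply: derivable_powR; rewrite in_itv /= andbT (lt_le_trans e0 ex).
Qed.

Lemma integral_powR_itv_cc (a e c : R) : 0 < a -> 0 < e -> e < c ->
  (\int[mu]_(x in `[e, c]) (x `^ (a - 1))%:E = ((c `^ a - e `^ a) / a)%:E)%E.
Proof.
move=> a0 e0 ec.
rewrite mulrBl EFinB (@continuous_FTC2 _ _ (fun x => x `^ a / a)) //.
- exact/derivable_within_continuous/derivable_powR_cc.
- apply: derivable_oo_LRcontinuous_cc (ltW ec) _ => x xec.
  by apply: derivableM => //; exact: derivable_powR_cc xec.
- move=> x /subset_itv_oo_cc xec.
  rewrite derive1Mr; last exact: derivable_powR_cc xec.
  rewrite powR_derive1; last first.
    by move: xec; rewrite !in_itv /= andbT => /andP[/(lt_le_trans e0)].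
  by rewrite mulrAC divff ?mul1r // gt_eqF.
Qed.

Lemma integral_powR_itv_oc (a c : R) : 0 < a -> 0 < c ->
  (\int[mu]_(x in `]0%R, c]) (x `^ (a - 1))%:E = (c `^ a / a)%:E)%E.
Proof.
move=> a0 c0.
pose e n := c * harmonic n.+1.
have e0 n : 0 < e n by rewrite mulr_gt0 // harmonic_gt0.
have ec n : e n < c by rewrite -[ltRHS]mulr1 ltr_pM2l // invf_lt1 // ltr1n.
have e_cvg : e n @[n --> \oo] --> 0.
  rewrite -(mulr0 c); apply: cvgM; first exact: cvg_cst.
  by have := @cvg_harmonic R; rewrite -cvg_shiftS.
pose E n : set R := `[e n, c]%classic.
have UE : \bigcup_n E n = `]0%R, c]%classic := bigcup_itv_cc_oc c c0.
have ndE : nondecreasing_seq E := nondecreasing_itv_cc_oc c c0.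
rewrite -UE; apply: (@ge0_integral_bigcup_lim R E (fun x => x `^ (a - 1)) _ _ ndE).
- by move=> n; exact: measurable_itv.
- exact: measurable_powR.
- by move=> x _; rewrite powR_ge0.
- under eq_fun do rewrite integral_powR_itv_cc //.
  apply: cvg_EFin; first exact: nearW.
  apply: cvgM; last exact: cvg_cst.
  rewrite -[X in _ --> X]subr0; apply: cvgB; first exact: cvg_cst.
  by apply: (cvg_at_rightP _ _ _).1 (powR_cvg0 a0) _ _.
Qed.

Lemma measurable_powR_expRNdiv (p b : R) :
  measurable_fun setT (fun x : R => x `^ p * expR (- (x / b))).
Proof.
apply: measurable_funM; first exact: measurable_powR.
apply: measurableT_comp => //; apply: measurable_funN => //.
exact: measurable_funM.
Qed.

Lemma integral_powR_expRNdiv_itv_oc_bounds (a b c : R) : 0 < a -> 0 < b -> 0 < c ->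
  ((expR (- (c / b)) * (c `^ a / a))%:E
     <= \int[mu]_(x in `]0%R, c]) (x `^ (a - 1) * expR (- (x / b)))%:E
     <= (c `^ a / a)%:E)%E.
Proof.
move=> a0 b0 c0.
have mpow : measurable_fun `]0%R, c] (fun x : R => x `^ (a - 1)).
  by apply: measurable_funTS; exact: measurable_powR.
have mg : measurable_fun `]0%R, c] (fun x : R => x `^ (a - 1) * expR (- (x / b))).
  by apply: measurable_funTS; exact: measurable_powR_expRNdiv.
have int_ce : (\int[mu]_(x in `]0%R, c]) (expR (- (c / b)) * x `^ (a - 1))%:E =
    (expR (- (c / b)) * (c `^ a / a))%:E)%E.
  under eq_integral do rewrite EFinM.
  rewrite ge0_integralZl_EFin ?expR_ge0 ?integral_powR_itv_oc //.
  - by move=> x _; rewrite lee_fin powR_ge0.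
  - exact/measurable_EFinP.
rewrite -int_ce -integral_powR_itv_oc //; apply/andP; split.
- apply: ge0_le_integral => //.
  + by move=> x _; rewrite lee_fin mulr_ge0 ?expR_ge0 ?powR_ge0.
  + by apply/measurable_EFinP; apply: measurable_funM.
  + exact/measurable_EFinP.
  + move=> x; rewrite /= in_itv /= => /andP[x0 xc].
    rewrite lee_fin mulrC ler_wpM2l ?powR_ge0 //.
    by rewrite ler_expR lerN2 ler_pM2r ?invr_gt0.
- apply: ge0_le_integral => //.
  + by move=> x _; rewrite lee_fin mulr_ge0 ?expR_ge0 ?powR_ge0.
  + exact/measurable_EFinP.
  + exact/measurable_EFinP.
  + move=> x; rewrite /= in_itv /= => /andP[x0 _].
    rewrite lee_fin ler_piMr ?powR_ge0 // expR_le1 oppr_le0.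
    by rewrite divr_ge0 // ltW.
Qed.

Lemma cvgy_powR_expRN (a : R) : x `^ a * expR (- x) @[x --> +oo] --> 0.
Proof.
pose k := (truncn `|a|).+1.
have ak : a <= k%:R by rewrite (le_trans (ler_norm a)) // ltW // truncnS_gt.
apply: (@squeeze_cvgr _ _ _ _ (fun=> 0) (fun x => k.+1`!%:R * x^-1)).
- near=> x; have x1 : 1 <= x by near: x; exact: nbhs_pinfty_ge.
  have x0 : 0 < x := lt_le_trans ltr01 x1.
  rewrite mulr_ge0 ?powR_ge0 ?expR_ge0 //=.
  have xk : x `^ a <= x ^+ k by rewrite -powR_mulrn ?ler_powR // ltW.
  have xk1 : x ^+ k.+1 <= k.+1`!%:R * expR x.
    rewrite mulrC -ler_pdivrMr ?ltr0n ?fact_gt0 //.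
    by apply: le_trans (expR_ge1Dxn k (ltW x0)); rewrite lerDr.
  rewrite (le_trans (ler_wpM2r (expR_ge0 _) xk)) // expRN ler_pdivrMr ?expR_gt0 //.
  by rewrite mulrAC ler_pdivlMr // -exprSr.
- exact: cvg_cst.
- by rewrite -(mulr0 k.+1`!%:R); apply: cvgM; [exact: cvg_cst | exact: cvgy_inv].
Unshelve. all: by end_near.
Qed.

Lemma derivable_powR_expRN (p x : R) : 0 < x ->
  derivable (fun y => y `^ p * expR (- y)) x 1.
Proof.
move=> x0; apply: derivableM; first by apply: derivable_powR; rewrite in_itv /= x0.
by apply: ex_derive; exact: is_derive1_comp.
Qed.

Lemma integral_powR_expRN_itv_cc (a e M : R) : 0 < a -> 0 < e -> e < M ->
  (\int[mu]_(x in `[e, M]) (x `^ a * expR (- x))%:E =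
   (e `^ a * expR (- e) - M `^ a * expR (- M))%:E +
   a%:E * \int[mu]_(x in `[e, M]) (x `^ (a - 1) * expR (- x))%:E)%E.
Proof.
move=> a0 e0 eM.
have gt0 x : x \in `[e, M] -> x \in `]0, +oo[.
  by rewrite !in_itv /= andbT => /andP[/(lt_le_trans e0)].
have dexpN x : derivable (fun y : R => expR (- y)) x 1.
  by apply: ex_derive; exact: is_derive1_comp.
rewrite (@integration_by_parts _ (@powR R ^~ a) (fun x => - expR (- x))
  (fun x => a * x `^ (a - 1)) (fun x => expR (- x))) //.
- congr (_ + _); first by congr EFin; ring.
  under eq_integral do rewrite mulrN -mulrA -mulNr EFinM.
  rewrite integralZl //; first by rewrite EFinN mulNe oppeK.
  apply: continuous_compact_integrable; first exact: segment_compact.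
  apply: derivable_within_continuous => x /gt0.
  by rewrite in_itv /= andbT; exact: derivable_powR_expRN.
- apply: derivable_within_continuous => x /gt0 x0.
  by apply: derivableM => //; exact: derivable_powR.
- apply: derivable_oo_LRcontinuous_cc (ltW eM) _; exact: derivable_powR_cc.
- by move=> x /subset_itv_oo_cc /gt0; exact: powR_derive1.
- by apply: derivable_within_continuous => x _; exact: dexpN.
- by apply: derivable_oo_LRcontinuous_cc (ltW eM) _ => x _; apply: derivableN.
- move=> x _; rewrite derive1E; apply: derive_val.
  have : is_derive x 1 (@expR R \o -%R) (expR (- x) * -1) by exact: is_derive1_comp.
  by move/is_deriveN; rewrite mulrN1 opprK.
Qed.

Lemma integral_powR_expRN_recursion (a : R) : 0 < a ->
  (\int[mu]_(x in `]0%R, +oo[) (x `^ a * expR (- x))%:E =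
   a%:E * \int[mu]_(x in `]0%R, +oo[) (x `^ (a - 1) * expR (- x))%:E)%E.
Proof.
move=> a0.
pose E n : set R := `[harmonic n, n.+2%:R]%classic.
have e0 n : 0 < harmonic n :> R := harmonic_gt0 n.
have eM n : harmonic n < n.+2%:R :> R.
  by apply: (@le_lt_trans _ _ 1); rewrite ?ltr1n // invf_le1 // ler1n.
have mE n : measurable (E n) by exact: measurable_itv.
have mpe p : measurable_fun setT (fun x : R => x `^ p * expR (- x)).
  by apply: measurable_funM; [exact: measurable_powR | exact: measurableT_comp].
have pe0 p x : 0 <= x `^ p * expR (- x) by rewrite mulr_ge0 ?powR_ge0 ?expR_ge0.
have UE : \bigcup_n E n = `]0%R, +oo[%classic := bigcup_itv_cc_oy.
have ndE : nondecreasing_seq E := nondecreasing_itv_cc_oy.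
rewrite -UE.
apply: (@ge0_integral_bigcup_lim R E (fun x => x `^ a * expR (- x)) _ mE ndE).
- exact: mpe.
- by move=> x _; exact: pe0.
under eq_fun do rewrite integral_powR_expRN_itv_cc //.
have boundary_cvg : ((harmonic n `^ a * expR (- harmonic n)
    - n.+2%:R `^ a * expR (- n.+2%:R))%:E @[n --> \oo] --> (0 : \bar R))%E.
  apply: cvg_EFin; first exact: nearW.
  rewrite -[X in _ --> X]subr0; apply: cvgB.
    rewrite -[X in _ --> X](mul0r (expR (- 0))); apply: cvgM.
      apply: (cvg_at_rightP _ _ _).1 (powR_cvg0 a0) _ _.
      by split => //; exact: cvg_harmonic.
    apply: continuous_cvg; first exact: continuous_expR.
    by apply: cvgN; exact: cvg_harmonic.
  apply: (cvg_comp _ _ _ (cvgy_powR_expRN a)).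
  by have := @cvgr_idn R; rewrite -2!cvg_shiftS.
have integral_cvg :
    (a%:E * \int[mu]_(x in E n) (x `^ (a - 1) * expR (- x))%:E @[n --> \oo] -->
     a%:E * \int[mu]_(x in \bigcup_n E n) (x `^ (a - 1) * expR (- x))%:E)%E.
  by apply: cvgeZl => //; apply: ge0_integral_bigcup_cvg => // x _; exact: pe0.
by have := cvgeD _ boundary_cvg integral_cvg; rewrite add0e; apply.
Qed.

Lemma GammaF_ge0 (a : R) : 0 <= GammaF a.
Proof.
by apply/fine_ge0/integral_ge0 => x _; rewrite lee_fin mulr_ge0 ?powR_ge0 ?expR_ge0.
Qed.

(** No integrability hypothesis: the recursion holds in the extended reals, and
    [fine] maps both sides to 0 if the integral diverges. *)
Lemma GammaFD1 (a : R) : 0 < a -> GammaF (a + 1) = a * GammaF a.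
Proof.
move=> a0; rewrite /GammaF /Rintegral addrK integral_powR_expRN_recursion //.
case: (\int[_]_(_ in _) _)%E => [r||] //=.
  by rewrite gt0_muley ?lte_fin // mulr0.
by rewrite gt0_muleNy ?lte_fin // mulr0.
Qed.

End powR_integrals.

Lemma mutually_independent_fine_prod {R : realType} {d : measure_display}
    {T : measurableType d} (P : probability T R) (K : nat)
    (X : 'I_K -> T -> R) (B : 'I_K -> set R) :
  mutually_independent P X -> (forall k, measurable (B k)) ->
  fine (P (\bigcap_(k in [set: 'I_K]) (X k @^-1` B k))) =
  \prod_(k < K) fine (P (X k @^-1` B k)).
Proof.
move=> [mX indep] mB; rewrite indep //.
have mXB k : measurable (X k @^-1` B k).
  by rewrite -[A in measurable A]setTI; exact: mX.
rewrite (eq_bigr _ (fun k _ => esym (fineK (fin_num_measure P _ (mXB k))))).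
by rewrite prodEFin.
Qed.

Section gamma_law.
Context {R : realType} {d : measure_display} {T : measurableType d}.
Context {P : probability T R} {a b : R} {Z : T -> R}.
Hypotheses (a0 : 0 < a) (b0 : 0 < b) (hZ : gamma_distributed P a b Z).
Context {I : Type} {F : set_system I} {FF : Filter F}.
Local Notation mu := (@lebesgue_measure R).

(** [GammaF] is defined through [fine], so a divergent integral would yield the
    junk value 0; the normalisation of the gamma law rules this out. *)
Lemma gamma_distributed_GammaF_gt0 : 0 < GammaF a.
Proof.
rewrite lt_neqAle GammaF_ge0 andbT eq_sym; apply/eqP => G0.
have [_ /(_ setT measurableT)] := hZ.
rewrite preimage_setT probability_setT.
under eq_integral do rewrite /gamma_pdf G0 mul0r invr0 mulr0 if_same.
by rewrite integral0 => /eqP; rewrite onee_eq0.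
Qed.

Lemma gamma_prob_itv_cc (c : R) : 0 < c ->
  P (Z @^-1` `[- c, c]) = (\int[mu]_(x in `]0%R, c]) (gamma_pdf a b x)%:E)%E.
Proof.
move=> c0; have [_ ->] := hZ; last exact: measurable_itv.
rewrite [LHS]integral_mkcond [RHS]integral_mkcond; apply: eq_integral => x _.
rewrite /patch !mem_setE !in_itv /=; have [x0|x0] := ltP 0 x.
  by rewrite (le_trans _ (ltW x0)) // oppr_le0 ltW.
by rewrite /gamma_pdf ltNge x0 /=; case: ifP.
Qed.

Lemma gamma_prob_itv_cc_bounds (c : R) : 0 < c ->
  expR (- (c / b)) * (c `^ a / (GammaF (a + 1) * b `^ a))
    <= fine (P (Z @^-1` `[- c, c]))
    <= c `^ a / (GammaF (a + 1) * b `^ a).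
Proof.
move=> c0; have G0 := gamma_distributed_GammaF_gt0.
set k := (GammaF a * b `^ a)^-1.
have k0 : 0 <= k by rewrite invr_ge0 mulr_ge0 ?powR_ge0 // ltW.
have -> : c `^ a / (GammaF (a + 1) * b `^ a) = k * (c `^ a / a).
  by rewrite GammaFD1 // /k; field; rewrite !gt_eqF ?powR_gt0.
have mZc : measurable (Z @^-1` `[- c, c]).
  by rewrite -[A in measurable A]setTI; exact: hZ.1 _ (measurable_itv _).
rewrite -!lee_fin fineK ?(fin_num_measure P _ mZc) // gamma_prob_itv_cc //.
have -> : (\int[mu]_(x in `]0%R, c]) (gamma_pdf a b x)%:E =
    k%:E * \int[mu]_(x in `]0%R, c]) (x `^ (a - 1) * expR (- (x / b)))%:E)%E.
  rewrite -ge0_integralZl_EFin //; last 2 first.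
  - by move=> x _; rewrite lee_fin mulr_ge0 ?expR_ge0 ?powR_ge0.
  - apply/measurable_EFinP; apply: measurable_funTS.
    exact: measurable_powR_expRNdiv.
  apply: eq_integral => x; rewrite mem_setE in_itv /= => /andP[x0 _].
  by rewrite /gamma_pdf x0 -EFinM mulrC.
have /andP[lo up] := integral_powR_expRNdiv_itv_oc_bounds _ _ _ a0 b0 c0.
by rewrite mulrCA !EFinM !lee_wpmul2l.
Qed.

Lemma gamma_prob_itv_cc_ratio_cvg (c : I -> R) :
  (\forall t \near F, 0 < c t) -> c t @[t --> F] --> 0 ->
  fine (P (Z @^-1` `[- c t, c t])) / (c t `^ a / (GammaF (a + 1) * b `^ a))
    @[t --> F] --> (1 : R).
Proof.
move=> c_gt0 c_cvg.
have G1 : 0 < GammaF (a + 1).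
  by rewrite GammaFD1 // mulr_gt0 ?gamma_distributed_GammaF_gt0.
apply: (@squeeze_cvgr _ _ _ _ (fun t => expR (- (c t / b))) (fun=> 1)).
- near=> t; have ct0 : 0 < c t by near: t.
  have q0 : 0 < c t `^ a / (GammaF (a + 1) * b `^ a).
    by rewrite divr_gt0 ?mulr_gt0 ?powR_gt0.
  have /andP[lo up] := gamma_prob_itv_cc_bounds _ ct0.
  by rewrite ler_pdivlMr // ler_pdivrMr // mul1r lo up.
- rewrite -expR0 -[X in expR X]oppr0 -(mul0r b^-1).
  apply: continuous_cvg; first exact: continuous_expR.
  by apply: cvgN; apply: cvgM; [exact: c_cvg | exact: cvg_cst].
- exact: cvg_cst.
Unshelve. all: by end_near.
Qed.

End gamma_law.

Lemma outage_factorE {R : realType} (a b G gout PL g : R) :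
  0 < a -> 0 < b -> 0 < G -> 0 < gout -> 0 < PL -> 0 < g ->
  (b ^+ 2 / (gout * G `^ (- (2 / a)) * PL) * g) `^ (- (a / 2)) =
  Num.sqrt (gout / (g / PL)) `^ a / (G * b `^ a).
Proof.
move=> a0 b0 G0 gout0 PL0 g0.
set G' := G `^ _; set s := gout / (g / PL).
have G'0 : 0 < G' by exact: powR_gt0.
have s0 : 0 < s by rewrite !divr_gt0.
have b20 : 0 < b ^+ 2 by exact: exprn_gt0.
have G's0 : 0 < G' * s by exact: mulr_gt0.
have ba0 : 0 < b `^ a by exact: powR_gt0.
have Gba0 : 0 < G * b `^ a by exact: mulr_gt0.
have sa0 : 0 < s `^ 2^-1 `^ a by exact/powR_gt0/powR_gt0.
have -> : b ^+ 2 / (gout * G' * PL) * g = b ^+ 2 / (G' * s).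
  by rewrite /s; field; rewrite !gt_eqF.
rewrite -powR12_sqrt ?ltW //; clearbody s.
apply: ln_inj; rewrite ?posrE ?powR_gt0 ?divr_gt0 //.
rewrite ln_powR !ln_div ?posrE // lnXn // !lnM ?posrE // !ln_powR.
by field; rewrite gt_eqF.
Qed.

Theorem corollary1 {R : realType} {d : measure_display} (T : measurableType d)
  (P : probability T R) (K : nat) (a b PL : 'I_K -> R) (gout : R)
  (Z : 'I_K -> T -> R) :
  (1 <= K)%N ->
  (forall k, 0 < a k) -> (forall k, 0 < b k) -> (forall k, 0 < PL k) ->
  0 < gout ->
  mutually_independent P Z ->
  (forall k, gamma_distributed P (a k) (b k) (Z k)) ->
  let Pout := fun gbar : R =>
    fine (P [set t | \big[Num.max/0]_(k < K) (gbar / PL k * Z k t ^+ 2) <= gout]) in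
  let Poutinf := fun gbar : R =>
    \prod_(k < K) ((b k ^+ 2 /
        (gout * GammaF (a k + 1) `^ (- (2 / a k)) * PL k) * gbar)
                   `^ (- (a k / 2))) in
  (Pout gbar / Poutinf gbar) @[gbar --> +oo] --> (1 : R).
Proof.
move=> _ a0 b0 PL0 gout0 indep hZ Pout Poutinf.
pose c k (g : R) := Num.sqrt (gout / (g / PL k)).
have g_gt0 : \forall g \near +oo, 0 < (g : R) by exact: nbhs_pinfty_gt.
have c_gt0 k : \forall g \near +oo, 0 < c k g.
  by near do rewrite sqrtr_gt0 !divr_gt0 //; apply: filterS g_gt0.
pose ratio k g := fine (P (Z k @^-1` `[- c k g, c k g])) /
  (c k g `^ a k / (GammaF (a k + 1) * b k `^ a k)).
have ratio_cvg : \prod_(k < K) ratio k g @[g --> +oo] --> \prod_(k < K) (1 : R).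
  apply: cvgr_prod => k.
  apply: (gamma_prob_itv_cc_ratio_cvg (a0 k) (b0 k) (hZ k)).
  - exact: c_gt0.
  - exact: cvgy_sqrt_div.
rewrite big1_eq in ratio_cvg.
suff /near_eq_cvg/cvg_trans :
    \forall g \near +oo, \prod_(k < K) ratio k g = Pout g / Poutinf g by apply.
near=> g; have g0 : 0 < g by near: g.
rewrite /Pout /Poutinf bigmax_mulr_sqr_le_setE //; last first.
  by move=> k; rewrite divr_gt0.
rewrite mutually_independent_fine_prod // -prodf_div.
apply: eq_bigr => k _; rewrite outage_factorE // GammaFD1 // mulr_gt0 //.
exact: gamma_distributed_GammaF_gt0 (hZ k).
Unshelve. all: by end_near.
Qed.
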